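(* Let $n\ge 1$ and $F=F_n(z_n)$. For $k=1,\dots,n$ define the $n\times n$ matrix $$E_k=M_k(2)-f_{k|n}\,e_{k|n}^T,$$ where $M_k(2)$ is the identity matrix with its $(k,k)$ entry replaced by $2$. Then $$F^{-1}=E_nE_{n-1}\cdots E_2E_1,$$ i.e. $F^{-1}=\prod_{i=1}^n\Big(M_{n+1-i}(2)-f_{n+1-i|n}\,e_{n+1-i|n}^T\Big)$ with the factors multiplied from left to right in order of increasing $i$.
   Context: $e_{k|n}\in\mathbb{R}^n$ denotes the $k$-th standard basis vector. For $1\le i\le n$, $e_{\bar i|n}\in\mathbb{R}^n$ has $k$-th entry $1$ if $i\mid k$, else $0$. For $2\le i\le n$, $f_{i|n}=\sum_{t=1}^{\lfloor \log_i n\rfloor} e_{\overline{i^t}|n}$, and by convention $f_{1|n}=1_n$ (all-ones vector). $F_n(z_n)=[f_{1|n}\ f_{2|n}\ \cdots\ f_{n|n}]\in\mathbb{R}^{n\times n}$. *)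

(* Indices: an ordinal k : 'I_n represents the 1-based index k+1. *)
From HB Require Import structures.
From mathcomp Require Import all_boot all_order all_algebra.
Set Implicit Arguments. Unset Strict Implicit. Unset Printing Implicit Defensive.
Import Order.TTheory GRing.Theory Num.Theory.
Local Open Scope ring_scope.

(* k-th entry (1-based) of f_{i|n}, as a natural number:
   f_{1|n} = 1_n; for i >= 2, sum_{t=1}^{floor(log_i n)} [i^t | k].
   floor(log_i n) = trunc_log i n (for i >= 2, n >= 1). *)
Definition f_entry (i n k : nat) : nat :=
  if i == 1%N then 1%N
  else (\sum_(1 <= t < (trunc_log i n).+1) (i ^ t %| k))%N.

Definition fvec (R : pzRingType) (n : nat) (i : 'I_n) : 'cV[R]_n :=
  \col_(k < n) (f_entry i.+1 n k.+1)%:R.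

Definition evec (R : pzRingType) (n : nat) (k : 'I_n) : 'cV[R]_n :=
  \col_(j < n) (if j == k then 1 else 0).

Definition Fmat (R : pzRingType) (n : nat) : 'M[R]_n :=
  \matrix_(k < n, j < n) (fvec R j) k ord0.

Definition M2 (R : pzRingType) (n : nat) (k : 'I_n) : 'M[R]_n :=
  \matrix_(i < n, j < n) (if i == j then (if i == k then 2 else 1) else 0).

Definition Emat (R : pzRingType) (n : nat) (k : 'I_n) : 'M[R]_n :=
  M2 R k - fvec R k *m (evec R k)^T.

Definition mxprod (R : pzRingType) (n : nat) (s : seq 'M[R]_n) : 'M[R]_n :=
  foldr (@mulmx R n n n) 1%:M s.

(* F is lower unitriangular: its (k, j) entry vanishes for k < j since every
   power j^t with t >= 1 exceeds k, and equals 1 for k = j.  For such a matrix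
   L, the factor E_k = 1 + e_k e_k^T - L_k e_k^T, where L_k is the k-th column
   of L, turns the k-th column of L into e_k once the columns before it have
   already been cleared, because row k of the partially cleared matrix is then
   e_k^T.  Hence E_n ... E_1 L = 1. *)
From HB Require Import structures.
From mathcomp Require Import all_boot all_order all_algebra.
Set Implicit Arguments. Unset Strict Implicit. Unset Printing Implicit Defensive.
Import Order.TTheory GRing.Theory Num.Theory.
Local Open Scope ring_scope.

Lemma f_entry_lt (n i k : nat) : (0 < k < i)%N -> f_entry i n k = 0%N.
Proof.
case/andP=> k_gt0 lt_ki; rewrite /f_entry; case: eqP => [i1 | _].
  by move: lt_ki k_gt0; rewrite i1 ltnS leqn0 => /eqP->.
rewrite big_nat big1 // => t /andP [t_gt0 _]; apply/eqP; rewrite eqb0.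
apply/negP => /(dvdn_leq k_gt0) le_it_k.
have le_i_it : (i <= i ^ t)%N.
  by rewrite -[X in (X <= _)%N]expn1 leq_pexp2l // (leq_ltn_trans _ lt_ki).
by move: (leq_trans le_i_it le_it_k); rewrite leqNgt lt_ki.
Qed.

Lemma f_entry_diag (n i : nat) : (0 < i <= n)%N -> f_entry i n i = 1%N.
Proof.
case/andP=> i_gt0 le_in; rewrite /f_entry; case: eqP => // /eqP i_neq1.
have i_gt1 : (1 < i)%N by rewrite ltn_neqAle eq_sym i_neq1.
have log_gt0 : (0 < trunc_log i n)%N by apply: trunc_log_max; rewrite ?expn1.
rewrite big_nat_recl // expn1 dvdnn big_nat big1 ?addn0 // => t /andP [t_gt0 _].
apply/eqP; rewrite eqb0; apply: contraTN isT => /(dvdn_leq i_gt0).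
by rewrite -[X in (_ <= X)%N]expn1 leq_exp2l // leqNgt ltnS t_gt0.
Qed.

Section ColumnElimination.

Variables (R : pzRingType) (n : nat) (L : 'M[R]_n).
Hypothesis L_upper0 : forall i j : 'I_n, (i < j)%N -> L i j = 0.
Hypothesis L_diag1 : forall i : 'I_n, L i i = 1.

Definition elim_factor (k : 'I_n) : 'M[R]_n :=
  1%:M + delta_mx k k - col k L *m delta_mx 0 k.

Definition cleared_cols (m : nat) : 'M[R]_n :=
  \matrix_(i, j) if (j < m)%N then (i == j)%:R else L i j.

Lemma row_cleared_cols (k : 'I_n) : row k (cleared_cols k) = delta_mx 0 k.
Proof.
apply/rowP => j; rewrite !mxE -!val_eqE /=.
case: ltngtP => [// | lt_kj | /val_inj->]; first exact: L_upper0.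
by rewrite L_diag1.
Qed.

Lemma col_cleared_cols (k : 'I_n) : col k (cleared_cols k) = col k L.
Proof. by apply/colP => i; rewrite !mxE ltnn. Qed.

Lemma mul_elim_factor (k : 'I_n) :
  elim_factor k *m cleared_cols k = cleared_cols k.+1.
Proof.
set G := cleared_cols k.
have -> : elim_factor k *m G = G + (delta_mx k 0 - col k G) *m row k G.
  rewrite col_cleared_cols mulmxBl mulmxDl mulmxBl mul1mx rowE !mulmxA.
  by rewrite mul_delta_mx addrA.
apply/matrixP => i j; rewrite row_cleared_cols !mxE big_ord1 !mxE.
case: (eqVneq j k) => [-> | neq_jk].
  by rewrite ltnn ltnSn eqxx andbT mulr1 addrC subrK.
rewrite [in RHS]ltnS [in RHS]leq_eqVlt val_eqE (negbTE neq_jk).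
by rewrite andbF mulr0 addr0.
Qed.

Lemma mul_elim_factors_prefix (m : nat) : (m <= n)%N ->
  mxprod [seq elim_factor k | k <- rev (take m (enum 'I_n))] *m L =
  cleared_cols m.
Proof.
elim: m => [_ | m IHm lt_mn].
  by rewrite take0 /= mul1mx; apply/matrixP => i j; rewrite mxE.
pose k := Ordinal lt_mn.
have -> : take m.+1 (enum 'I_n) = rcons (take m (enum 'I_n)) k.
  rewrite (take_nth k) ?size_enum_ord //; congr rcons.
  by apply: val_inj; rewrite /= nth_enum_ord.
rewrite rev_rcons [mxprod _]/= -mulmxA IHm ?(ltnW lt_mn) //.
exact: mul_elim_factor.
Qed.

Lemma mul_elim_factors :
  mxprod [seq elim_factor k | k <- rev (enum 'I_n)] *m L = 1%:M.
Proof.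
have := @mul_elim_factors_prefix n (leqnn n).
rewrite -[X in take X](size_enum_ord n) take_size => ->.
by apply/matrixP => i j; rewrite !mxE ltn_ord.
Qed.

End ColumnElimination.

Lemma invmx_lower_unitriangular (R : comUnitRingType) (n : nat) (L : 'M[R]_n) :
  (forall i j : 'I_n, (i < j)%N -> L i j = 0) -> (forall i : 'I_n, L i i = 1) ->
  L \in unitmx /\
  invmx L = mxprod [seq elim_factor L k | k <- rev (enum 'I_n)].
Proof.
move=> L_upper0 L_diag1; have prodL := mul_elim_factors L_upper0 L_diag1.
have [_ L_unit] := mulmx1_unit prodL; split=> //.
by rewrite -[RHS]mulmx1 -(mulmxV L_unit) mulmxA prodL mul1mx.
Qed.

Lemma Emat_elim_factor (R : pzRingType) (n : nat) (k : 'I_n) :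
  Emat R k = elim_factor (Fmat R n) k.
Proof.
apply/matrixP => i j; rewrite !mxE !big_ord1 !mxE eqxx /=.
congr (_ - _ * _); last by case: eqP.
case: (eqVneq i j) => [-> | neq_ij]; first by case: eqP; rewrite /= ?addr0.
case: (eqVneq i k) => [eq_ik | _]; last by rewrite addr0.
by rewrite /= -eq_ik eq_sym (negbTE neq_ij) addr0.
Qed.

Theorem theorem5 (R : realFieldType) (n : nat) (hn : (1 <= n)%N) :
  Fmat R n \in unitmx /\
  invmx (Fmat R n) = mxprod [seq Emat R k | k <- rev (enum 'I_n)].
Proof.
have F_upper0 (i j : 'I_n) : (i < j)%N -> Fmat R n i j = 0.
  by move=> lt_ij; rewrite !mxE f_entry_lt.
have F_diag1 (i : 'I_n) : Fmat R n i i = 1.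
  by rewrite !mxE f_entry_diag ?ltn_ord.
rewrite (eq_map (@Emat_elim_factor R n)).
exact: invmx_lower_unitriangular.
Qed.
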